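(* Let $\beta\in\mathcal{A}$ and let $f=\sum_{\alpha\in\mathcal{A}}c_\alpha\mathrm{e}^\alpha\in C_X(\mathcal{A},\beta)$ with $c_\beta<0$. Suppose $\nu\in\mathbb{R}^{\mathcal{A}}$ satisfies the relative entropy condition $\mathbf{1}^T\nu=0$, $\nu\ne0$ and $\sigma_X(-\mathcal{A}\nu)+D(\nu_{\setminus\beta},e\,c_{\setminus\beta})\le c_\beta$. If $\nu=\sum_{i=1}^k\theta_i\nu^{(i)}$ is a convex combination (with $\theta_i>0$, $\sum\theta_i=1$) of pairwise non-proportional vectors $\nu^{(i)}\in N_\beta$ ($k\ge2$) and the map $\tilde\nu\mapsto\sigma_X(-\mathcal{A}\tilde\nu)$ is affine on $\operatorname{conv}\{\nu^{(1)},\dots,\nu^{(k)}\}$, then $f$ does not generate an extreme ray of $C_X(\mathcal{A},\beta)$.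
   Context: $X\subset\mathbb{R}^n$ is a nonempty closed convex set and $\mathcal{A}\subset\mathbb{R}^n$ is a nonempty finite set such that the functions $x\mapsto\exp(\alpha^Tx)$, $\alpha\in\mathcal{A}$, are linearly independent on $X$. $\mathbb{R}^{\mathcal{A}}$ denotes real vectors indexed by $\mathcal{A}$; for $c\in\mathbb{R}^{\mathcal{A}}$, $c_{\setminus\beta}\in\mathbb{R}^{\mathcal{A}\setminus\{\beta\}}$ deletes the $\beta$-entry. $\mathcal{A}$ is viewed as the linear map $\mathbb{R}^{\mathcal{A}}\to\mathbb{R}^n$, $\mathcal{A}\nu=\sum_{\alpha}\alpha\nu_\alpha$. $\sigma_X(y)=\sup\{y^Tx:x\in X\}$. $N_\beta=\{\nu\in\mathbb{R}^{\mathcal{A}}:\nu_\alpha\ge0\ \forall\alpha\neq\beta,\ \sum_\alpha\nu_\alpha=0\}$. A signomial supported on $\mathcal{A}$ is $f=\sum_{\alpha\in\mathcal{A}}c_\alpha\mathrm{e}^\alpha$ with $\mathrm{e}^\alpha(x)=\exp(\alpha^Tx)$, identified with its coefficient vector $c$. For $\beta\in\mathcal{A}$, the $X$-AGE cone $C_X(\mathcal{A},\beta)$ is the set of signomials supported on $\mathcal{A}$ that are nonnegative on $X$ and satisfy $c_\alpha\ge0$ for all $\alpha\neq\beta$. The relative entropy is $D(\nu,c)=\sum_\alpha\nu_\alpha\log(\nu_\alpha/c_\alpha)$, continuously extended to nonnegative arguments (with $0\log(0/c)=0$, $\nu\log(\nu/0)=+\infty$ for $\nu>0$), and $D(\nu,c)=+\infty$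 if $\nu$ or $c$ has a negative entry; $e$ is Euler's number. (It is known that $f\in C_X(\mathcal{A},\beta)$ iff some nonzero $\nu$ satisfies the relative entropy condition above.) *)

From HB Require Import structures.
From mathcomp Require Import all_boot all_order all_algebra.
From mathcomp Require Import all_classical all_reals all_analysis.
Set Implicit Arguments. Unset Strict Implicit. Unset Printing Implicit Defensive.
Import Order.TTheory GRing.Theory Num.Theory.
Import numFieldTopology.Exports.
Local Open Scope classical_set_scope.
Local Open Scope ring_scope.

Section Defs.
Variables (R : realType) (n : nat) (I : finType).

Definition dotv (y x : 'rV[R]_n) : R := \sum_(j < n) y 0 j * x 0 j.

Definition convex_rV (X : set 'rV[R]_n) : Prop :=
  forall x y (t : R), X x -> X y -> 0 <= t -> t <= 1 ->
    X (t *: x + (1 - t) *: y).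

Definition supp_fun (X : set 'rV[R]_n) (y : 'rV[R]_n) : \bar R :=
  ereal_sup [set (dotv y x)%:E | x in X].

Definition Amap (alpha : I -> 'rV[R]_n) (nu : I -> R) : 'rV[R]_n :=
  \sum_(i : I) nu i *: alpha i.

Definition signomial (alpha : I -> 'rV[R]_n) (c : I -> R) (x : 'rV[R]_n) : R :=
  \sum_(i : I) c i * expR (dotv (alpha i) x).

Definition AGE_cone (X : set 'rV[R]_n) (alpha : I -> 'rV[R]_n) (beta : I)
  : set (I -> R) :=
  [set c | (forall x, X x -> 0 <= signomial alpha c x) /\
           (forall i, i != beta -> 0 <= c i)].

Definition N_beta (beta : I) : set (I -> R) :=
  [set nu | (forall i, i != beta -> 0 <= nu i) /\ \sum_(i : I) nu i = 0].

(* One summand of the relative entropy, extended continuously, with value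
   +oo as soon as one argument is negative. *)
Definition relent_term (v c : R) : \bar R :=
  if (v < 0) || (c < 0) then +oo%E
  else if v == 0 then 0%E
  else if c == 0 then +oo%E
  else (v * ln (v / c))%:E.

Definition relent_minus (beta : I) (nu d : I -> R) : \bar R :=
  (\sum_(i : I | i != beta) relent_term (nu i) (d i))%E.

Definition proportional (u v : I -> R) : Prop :=
  exists t : R, (u = fun i => t * v i) \/ (v = fun i => t * u i).

Definition conv_hull (k : nat) (pts : 'I_k -> I -> R) : set (I -> R) :=
  [set w | exists lam : 'I_k -> R, (forall j, 0 <= lam j) /\
      \sum_(j < k) lam j = 1 /\ w = fun i => \sum_(j < k) lam j * pts j i].

Definition affine_on (phi : (I -> R) -> \bar R) (S : set (I -> R)) : Prop :=
  exists (a : I -> R) (b : R),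
    forall w, S w -> phi w = (\sum_(i : I) a i * w i + b)%:E.

Definition extreme_ray (K : set (I -> R)) (f : I -> R) : Prop :=
  K f /\ f <> (fun _ => 0) /\
  forall g h : I -> R, K g -> K h -> f = (fun i => g i + h i) ->
    exists t : R, 0 <= t /\ g = (fun i => t * f i).

End Defs.

From HB Require Import structures.
From mathcomp Require Import all_boot all_order all_algebra.
From mathcomp Require Import all_classical all_reals all_analysis.
From mathcomp Require Import ring lra.
Set Implicit Arguments. Unset Strict Implicit. Unset Printing Implicit Defensive.
Import Order.TTheory GRing.Theory Num.Theory.
Import numFieldTopology.Exports.
Local Open Scope classical_set_scope.
Local Open Scope ring_scope.

(* Write nu = sum_j theta_j nu^(j) and let sigma_j be the
   value at nu^(j) of the affine function that agrees with
   w |-> sigma_X(-A w) on conv{nu^(j)}.  For every j we build a signomial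
   g_j with coefficients
     g_j(a) = c_a nu^(j)_a / nu_a                (a <> beta, nu_a <> 0),
     g_j(a) = c_a                                (a <> beta, nu_a = 0),
     g_j(beta) = sigma_j + sum_{a<>beta} nu^(j)_a log(nu_a / (e c_a)).
   The tangent bound e^y >= 1 + y shows that every g_j is an AGE certificate
   of relative-entropy type, hence lies in C_X(A, beta); by construction
   sum_j theta_j g_j agrees with c off beta and, by affinity of sigma and the
   relative entropy hypothesis, is at most c_beta at beta.  Hence both
   theta_j g_j and c - theta_j g_j lie in the cone.  If c generated an
   extreme ray, theta_j g_j would be a multiple of c, which forces nu^(j) to
   be a multiple of nu for every j; two such vectors are proportional,
   contradicting the hypothesis that the nu^(j) are pairwise
   non-proportional. *)

Lemma dotv_Amap (R : realType) (n : nat) (I : finType)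
  (alpha : I -> 'rV[R]_n) (mu : I -> R) (x : 'rV[R]_n) :
  dotv (- Amap alpha mu) x = - \sum_a mu a * dotv (alpha a) x.
Proof.
rewrite /dotv /Amap.
transitivity (\sum_(j < n) \sum_a - (mu a * alpha a 0 j * x 0 j)).
  apply: eq_bigr => j _; rewrite mxE summxE -sumrN mulr_suml.
  by apply: eq_bigr => a _; rewrite !mxE mulNr.
rewrite exchange_big /= -sumrN; apply: eq_bigr => a _.
by rewrite sumrN mulr_sumr; congr (- _); apply: eq_bigr => j _; rewrite mulrA.
Qed.

Section AGECone.
Variables (R : realType) (n : nat) (I : finType).
Variables (alpha : I -> 'rV[R]_n) (X : set 'rV[R]_n) (beta : I).

Notation K := (AGE_cone X alpha beta).

(* Certificate of membership in C_X(A, beta): given mu with 1^T mu = 0,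
   pointwise bounds mu_a y - w_a <= d_a e^y off beta and an upper bound s on
   sigma_X(-A mu) with s + sum_{a<>beta} w_a <= d_beta, the signomial d is
   nonnegative on X (divide by e^{beta^T x} and sum the pointwise bounds). *)
Lemma AGE_certificate (d mu w : I -> R) (s : R) :
  \sum_i mu i = 0 ->
  (forall a, a != beta -> 0 <= d a) ->
  (forall a, a != beta -> forall y, mu a * y - w a <= d a * expR y) ->
  (forall x, X x -> dotv (- Amap alpha mu) x <= s) ->
  s + \sum_(a | a != beta) w a <= d beta ->
  K d.
Proof.
move=> mu_sum d_ge0 pointwise s_bound budget; split => // x Xx.
pose y a := dotv (alpha a) x - dotv (alpha beta) x.
have factor : signomial alpha d x =
    expR (dotv (alpha beta) x) * \sum_a d a * expR (y a).
  rewrite /signomial mulr_sumr; apply: eq_bigr => a _.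
  by rewrite /y mulrCA -expRD addrC subrK.
rewrite factor mulr_ge0 ?(ltW (expR_gt0 _)) // (bigD1 beta) //= /y subrr.
rewrite expR0 mulr1.
have lin_part : \sum_(a | a != beta) mu a * y a = - dotv (- Amap alpha mu) x.
  rewrite dotv_Amap opprK; transitivity (\sum_a mu a * y a).
    by rewrite [RHS](bigD1 beta) //= /y subrr mulr0 add0r.
  rewrite /y; under eq_bigr => a _ do rewrite mulrBr.
  by rewrite sumrB -mulr_suml mu_sum mul0r subr0.
have tangent : \sum_(a | a != beta) (mu a * y a - w a)
    <= \sum_(a | a != beta) d a * expR (y a) by apply: ler_sum => a /pointwise.
rewrite sumrB lin_part in tangent.
have := s_bound x Xx; lra.
Qed.

Lemma AGE_cone_scale (d : I -> R) (t : R) :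
  0 <= t -> K d -> K (fun a => t * d a).
Proof.
move=> t0 [d_nonneg d_coef]; split=> [x Xx|a ha]; last by rewrite mulr_ge0 ?d_coef.
have -> : signomial alpha (fun a => t * d a) x = t * signomial alpha d x.
  by rewrite /signomial mulr_sumr; apply: eq_bigr => a _; rewrite mulrA.
by rewrite mulr_ge0 ?d_nonneg.
Qed.

Lemma AGE_cone_add (d1 d2 : I -> R) :
  K d1 -> K d2 -> K (fun a => d1 a + d2 a).
Proof.
move=> [h1 h2] [g1 g2]; split=> [x Xx|a ha]; last by rewrite addr_ge0 ?h2 ?g2.
have -> : signomial alpha (fun a => d1 a + d2 a) x =
    signomial alpha d1 x + signomial alpha d2 x.
  by rewrite /signomial -big_split; apply: eq_bigr => a _; rewrite mulrDl.
by rewrite addr_ge0 ?h1 ?g1.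
Qed.

Lemma AGE_cone_sum (J : finType) (P : pred J) (F : J -> I -> R) :
  (forall j, P j -> K (F j)) -> K (fun a => \sum_(j | P j) F j a).
Proof.
move=> hF; split=> [x Xx|a ha].
  have -> : signomial alpha (fun a => \sum_(j | P j) F j a) x =
      \sum_(j | P j) signomial alpha (F j) x.
    by rewrite /signomial exchange_big /=; apply: eq_bigr => a _; rewrite mulr_suml.
  by apply: sumr_ge0 => j /hF [+ _]; apply.
by apply: sumr_ge0 => j /hF [_]; apply.
Qed.

Lemma AGE_cone_nonneg (d : I -> R) : (forall a, 0 <= d a) -> K d.
Proof.
move=> d_ge0; split=> // x _; apply: sumr_ge0 => a _.
by rewrite mulr_ge0 ?(ltW (expR_gt0 _)).
Qed.

Lemma AGE_cone_remove_summand (J : finType) (g : J -> I -> R) (c : I -> R)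
    (j : J) :
  (forall i, K (g i)) ->
  (forall a, a != beta -> \sum_i g i a = c a) ->
  \sum_i g i beta <= c beta ->
  K (fun a => c a - g j a).
Proof.
move=> gK sum_off sum_beta.
have -> : (fun a => c a - g j a) = (fun a => \sum_(i | i != j) g i a +
    (if a == beta then c beta - \sum_i g i beta else 0)).
  apply: funext => a /=; case: eqP => [->|/eqP ha].
    by rewrite [\sum_i g i beta](bigD1 j) //=; ring.
  by rewrite -(sum_off a ha) (bigD1 j) //=; ring.
apply: AGE_cone_add; first exact: AGE_cone_sum.
by apply: AGE_cone_nonneg => a; case: eqP => _ //; rewrite subr_ge0.
Qed.

End AGECone.

Lemma extreme_ray_summand (R : realType) (I : finType) (K : set (I -> R))
    (f g : I -> R) :
  extreme_ray K f -> K g -> K (fun a => f a - g a) ->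
  exists t, g = fun a => t * f a.
Proof.
move=> [_ [_ ext]] Kg Kh.
have split_f : f = (fun a => g a + (f a - g a)).
  by apply: funext => a; rewrite addrC subrK.
by have [t [_ ->]] := ext g _ Kg Kh split_f; exists t.
Qed.

Lemma proportional_multiples (R : realType) (I : finType) (w : I -> R)
    (s0 s1 : R) :
  proportional (fun i => s0 * w i) (fun i => s1 * w i).
Proof.
have [->|s0_nz] := eqVneq s0 0.
  by exists 0; left; apply: funext => i; rewrite !mul0r.
by exists (s1 / s0); right; apply: funext => i; field.
Qed.

Lemma relent_term_ge (R : realType) (v c : R) :
  ((v * ln (v / c))%:E <= relent_term v c)%E.
Proof.
rewrite /relent_term; case: ifP => _; first exact: leey.
case: ifP => [/eqP -> | _]; first by rewrite mul0r.
by case: ifP => _; [exact: leey|].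
Qed.

Lemma relent_term_finite_pos (R : realType) (v c : R) :
  0 < v -> relent_term v c != +oo%E -> 0 < c.
Proof.
move=> v0; rewrite /relent_term; case: ifP => [//| /norP [_ ]].
rewrite (gt_eqF v0) -leNgt le_eqVlt => /orP [/eqP <-|//].
by rewrite eqxx.
Qed.

(* The tangent inequality e^z >= 1 + z, in the form of the pointwise bound
   m y - m log(v / (e c)) <= (c m / v) e^y needed for the pieces g_j. *)
Lemma entropy_tangent_bound (R : realType) (m v c y : R) :
  0 <= m -> 0 < v -> 0 < c ->
  m * y - m * ln (v / (expR 1 * c)) <= c * m / v * expR y.
Proof.
move=> m0 v0 c0; have q0 : 0 < v / c by rewrite divr_gt0.
have log_shift : ln (v / (expR 1 * c)) = ln (v / c) - 1.
  have -> : v / (expR 1 * c) = (v / c) * (expR 1)^-1 by rewrite invfM; ring.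
  by rewrite lnM ?posrE ?invr_gt0 ?expR_gt0 // lnV ?posrE ?expR_gt0 // expRK.
have exp_form : c * m / v * expR y = m * expR (y - ln (v / c)).
  by rewrite expRD expRN lnK ?posrE // invfM invrK; ring.
rewrite log_shift exp_form -mulrBr ler_wpM2l //.
have := expR_ge1Dx (y - ln (v / c)); lra.
Qed.

Section Decomposition.
Variables (R : realType) (n : nat) (I : finType).
Variables (alpha : I -> 'rV[R]_n) (X : set 'rV[R]_n) (beta : I).
Variables (c nu : I -> R) (k : nat) (theta : 'I_k -> R) (nus : 'I_k -> I -> R).
Variables (aff_lin : I -> R) (aff_const : R).

Hypothesis c_coef : forall a, a != beta -> 0 <= c a.
Hypothesis nu_sum : \sum_i nu i = 0.
Hypothesis theta_pos : forall j, 0 < theta j.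
Hypothesis theta_sum : \sum_(j < k) theta j = 1.
Hypothesis nus_N : forall j, N_beta beta (nus j).
Hypothesis nu_comb : nu = fun i => \sum_(j < k) theta j * nus j i.
Hypothesis sigma_affine : forall w, conv_hull nus w ->
  supp_fun X (- Amap alpha w) = (\sum_i aff_lin i * w i + aff_const)%:E.
Hypothesis rel_entropy : (supp_fun X (- Amap alpha nu)
  + relent_minus beta nu (fun i => (expR 1 * c i)%R) <= (c beta)%:E)%E.

Let nuE a : nu a = \sum_(j < k) theta j * nus j a.
Proof. by rewrite nu_comb. Qed.

Let theta_nus_ge0 j a : a != beta -> 0 <= theta j * nus j a.
Proof. by move=> ha; rewrite mulr_ge0 ?(ltW (theta_pos j)) ?(nus_N j).1. Qed.

Lemma nu_off_beta_ge0 a : a != beta -> 0 <= nu a.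
Proof. by move=> ha; rewrite nuE sumr_ge0 // => j _; exact: theta_nus_ge0. Qed.

(* Off beta the nu^(j) are nonnegative, so they all vanish where nu does. *)
Lemma nus_vanish a j : a != beta -> nu a = 0 -> nus j a = 0.
Proof.
move=> ha; rewrite nuE => nu0.
have : theta j * nus j a = 0.
  exact: (psumr_eq0P (fun i _ => theta_nus_ge0 i ha) nu0).
by move/eqP; rewrite mulf_eq0 (gt_eqF (theta_pos j)) => /eqP.
Qed.

Definition sigma_at (j : 'I_k) : R := \sum_i aff_lin i * nus j i + aff_const.

Lemma sigma_at_vertex j : supp_fun X (- Amap alpha (nus j)) = (sigma_at j)%:E.
Proof.
apply: sigma_affine; exists (fun j' => (j' == j)%:R); split=> [j'|]; first exact: ler0n.
split; first by rewrite (bigD1 j) //= eqxx big1 ?addr0 // => j' /negbTE ->.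
apply: funext => i /=; rewrite (bigD1 j) //= eqxx mul1r big1 ?addr0 //.
by move=> j' /negbTE ->; rewrite mul0r.
Qed.

Lemma sigma_at_nu :
  supp_fun X (- Amap alpha nu) = (\sum_i aff_lin i * nu i + aff_const)%:E.
Proof.
apply: sigma_affine; exists theta; split; first by move=> j; exact: ltW.
by split.
Qed.

Definition log_weight (a : I) : R := ln (nu a / (expR 1 * c a)).

Let relent_sum_ge (P : pred I) :
  ((\sum_(a | P a) nu a * log_weight a)%:E <=
   \sum_(a | P a) relent_term (nu a) (expR 1 * c a))%E.
Proof. by rewrite -sumEFin; apply: lee_sum => a _; exact: relent_term_ge. Qed.

Lemma rel_entropy_finite :
  \sum_i aff_lin i * nu i + aff_const
    + \sum_(a | a != beta) nu a * log_weight a <= c beta.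
Proof.
rewrite -lee_fin EFinD -sigma_at_nu; apply: le_trans rel_entropy.
by apply: leeD2l; exact: relent_sum_ge.
Qed.

(* Finiteness of the relative entropy forces c_a > 0 on the support of nu. *)
Lemma c_pos_on_support a : a != beta -> nu a != 0 -> 0 < c a.
Proof.
move=> ha nu_nz; have nu_pos : 0 < nu a by rewrite lt_def nu_nz nu_off_beta_ge0.
suff : 0 < expR 1 * c a by rewrite pmulr_rgt0 ?expR_gt0.
apply: (relent_term_finite_pos nu_pos); apply/negP => /eqP term_inf.
move: rel_entropy; rewrite /relent_minus (bigD1 a) //= term_inf sigma_at_nu.
have rest := relent_sum_ge (fun i => (i != beta) && (i != a)).
by rewrite addye ?addey // gt_eqF // (lt_le_trans (ltNyr _) rest).
Qed.

Definition piece (j : 'I_k) (a : I) : R :=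
  if a == beta then sigma_at j + \sum_(b | b != beta) nus j b * log_weight b
  else if nu a == 0 then c a else c a * nus j a / nu a.

Lemma piece_in_cone j : AGE_cone X alpha beta (piece j).
Proof.
have [nus_ge0 nus_sum] := nus_N j.
apply: (AGE_certificate (mu := nus j) (w := fun b => nus j b * log_weight b)
                        (s := sigma_at j)) => //.
- move=> a ha; rewrite /piece (negbTE ha); case: ifP => [_|/negbT nu_nz].
    exact: c_coef.
  by rewrite divr_ge0 ?nu_off_beta_ge0 // mulr_ge0 ?nus_ge0 ?(ltW (c_pos_on_support _ _)).
- move=> a ha y; rewrite /piece (negbTE ha); case: ifP => [/eqP nu0|/negbT nu_nz].
    by rewrite nus_vanish // !mul0r subr0 mulr_ge0 ?c_coef ?(ltW (expR_gt0 _)).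
  apply: entropy_tangent_bound; first exact: nus_ge0.
    by rewrite lt_def nu_nz nu_off_beta_ge0.
  exact: c_pos_on_support.
- by move=> x Xx; rewrite -lee_fin -sigma_at_vertex; apply: ereal_sup_ubound; exists x.
- by rewrite /piece eqxx.
Qed.

Lemma pieces_sum_off_beta a :
  a != beta -> \sum_j theta j * piece j a = c a.
Proof.
move=> ha; rewrite /piece (negbTE ha); have [nu0|nu_nz] := eqVneq (nu a) 0.
  by rewrite -mulr_suml theta_sum mul1r.
transitivity (c a / nu a * \sum_j theta j * nus j a).
  by rewrite mulr_sumr; apply: eq_bigr => j _; ring.
by rewrite -nuE divfK.
Qed.

(* At beta, affinity of sigma turns the relative entropy hypothesis into
   sum_j theta_j g_j(beta) <= c_beta. *)
Lemma pieces_sum_beta : \sum_j theta j * piece j beta <= c beta.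
Proof.
suff -> : \sum_j theta j * piece j beta = \sum_i aff_lin i * nu i + aff_const
    + \sum_(b | b != beta) nu b * log_weight b by exact: rel_entropy_finite.
rewrite /piece eqxx; under eq_bigr => j _ do rewrite mulrDr.
rewrite big_split /=; congr (_ + _).
  rewrite /sigma_at; under eq_bigr => j _ do rewrite mulrDr.
  rewrite big_split /= -mulr_suml theta_sum mul1r; congr (_ + _).
  under [in RHS]eq_bigr => i _ do rewrite nuE mulr_sumr.
  rewrite exchange_big /=; apply: eq_bigr => j _; rewrite mulr_sumr.
  by apply: eq_bigr => i _; ring.
under [in RHS]eq_bigr => i _ do rewrite nuE mulr_suml.
rewrite exchange_big /=; apply: eq_bigr => j _; rewrite mulr_sumr.
by apply: eq_bigr => i _; ring.
Qed.

Lemma piece_multiple_of_c j (t : R) :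
  (fun a => theta j * piece j a) = (fun a => t * c a) ->
  nus j = fun i => t / theta j * nu i.
Proof.
move=> multiple; have theta_nz : theta j != 0 by rewrite gt_eqF.
have off_beta a : a != beta -> nus j a = t / theta j * nu a.
  move=> ha; have [nu0|nu_nz] := eqVneq (nu a) 0.
    by rewrite nus_vanish // nu0 mulr0.
  have := congr1 (fun f => f a) multiple; rewrite /= /piece (negbTE ha) (negbTE nu_nz).
  have c_nz : c a != 0 by rewrite gt_eqF ?c_pos_on_support.
  move=> e; have -> : nus j a = theta j * (c a * nus j a / nu a) * nu a / (theta j * c a).
    by field; rewrite theta_nz c_nz nu_nz.
  by rewrite e; field; rewrite theta_nz c_nz.
have at_beta (f : I -> R) : \sum_i f i = 0 -> f beta = - \sum_(a | a != beta) f a.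
  by rewrite (bigD1 beta) //= => /eqP; rewrite addr_eq0 => /eqP.
apply: funext => a; have [->|ha] := eqVneq a beta; last exact: off_beta.
rewrite (at_beta _ (nus_N j).2) (at_beta _ nu_sum) mulrN mulr_sumr.
by congr (- _); apply: eq_bigr => b hb; exact: off_beta.
Qed.

Lemma extreme_forces_multiples j :
  extreme_ray (AGE_cone X alpha beta) c -> exists s, nus j = fun i => s * nu i.
Proof.
move=> ext; pose g i a := theta i * piece i a.
have gK i : AGE_cone X alpha beta (g i).
  by apply: AGE_cone_scale (piece_in_cone i); exact: ltW.
have [t multiple] := extreme_ray_summand ext (gK j)
  (AGE_cone_remove_summand j gK pieces_sum_off_beta pieces_sum_beta).
by exists (t / theta j); exact: piece_multiple_of_c.
Qed.

End Decomposition.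

Theorem lemma4p1 (R : realType) (n : nat) (I : finType)
  (alpha : I -> 'rV[R]_n) (X : set 'rV[R]_n)
  (X_nonempty : X !=set0) (X_closed : closed X) (X_convex : convex_rV X)
  (alpha_inj : injective alpha)
  (lin_indep : forall c : I -> R,
      (forall x, X x -> signomial alpha c x = 0) -> forall i, c i = 0)
  (beta : I) (c : I -> R)
  (hf : AGE_cone X alpha beta c) (hcbeta : c beta < 0)
  (nu : I -> R) (hnu_sum : \sum_(i : I) nu i = 0) (hnu_nz : exists i, nu i != 0)
  (hrel : (supp_fun X (- Amap alpha nu)
            + relent_minus beta nu (fun i => (expR 1 * c i)%R) <= (c beta)%:E)%E)
  (k : nat) (hk : (2 <= k)%N) (theta : 'I_k -> R) (nus : 'I_k -> I -> R)
  (htheta_pos : forall j, 0 < theta j) (htheta_sum : \sum_(j < k) theta j = 1)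
  (hnus : forall j, N_beta beta (nus j))
  (hnonprop : forall j1 j2, j1 != j2 -> ~ proportional (nus j1) (nus j2))
  (hcomb : nu = fun i => \sum_(j < k) theta j * nus j i)
  (haff : affine_on (fun w => supp_fun X (- Amap alpha w)) (conv_hull nus)) :
  ~ extreme_ray (AGE_cone X alpha beta) c.
Proof.
move=> ext; have [aff_lin [aff_const sigma_affine]] := haff.
have multiple j : exists s, nus j = fun i => s * nu i.
  exact: (extreme_forces_multiples hf.2 hnu_sum htheta_pos htheta_sum hnus hcomb
            sigma_affine hrel j ext).
pose first : 'I_k := Ordinal (ltnW hk); pose second : 'I_k := Ordinal hk.
have [s0 e0] := multiple first; have [s1 e1] := multiple second.
apply: (hnonprop first second) => //; rewrite e0 e1.
exact: (proportional_multiples nu s0 s1).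
Qed.
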